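(* Let $X$ be a Baire space and let $Y$ be a topological space which has a dense set of $W$-points and such that the strong Choquet game $Ch(Y)$ is $\beta$-unfavorable. Then $X\times Y$ is a Baire space.
   Context: A topological space is a Baire space if every countable intersection of dense open subsets is dense. The strong Choquet game $Ch(Y)$: players $\beta$ and $\alpha$ alternate, $\beta$ first; at round $n$, $\beta$ chooses a point $x_n$ and an open set $V_n\ni x_n$ (with $V_n\subseteq U_{n-1}$ if $n\ge1$), then $\alpha$ chooses an open $U_n$ with $x_n\in U_n\subseteq V_n$; $\alpha$ wins if $\bigcap_n U_n\neq\emptyset$, otherwise $\beta$ wins. $Ch(Y)$ is $\beta$-unfavorable if $\beta$ has no winning strategy (a strategy being a function from finite sequences of opponent moves to legal moves, winning if every compatible play is won). The Gruenhage game $G(Y)$ at a point $y\in Y$: at round $n$, Player I chooses an open neighborhood $U_n$ of $y$ and Player II chooses a point $y_n\in U_n$; Player I wins if $(y_n)_n$ converges to $y$. A point $y$ is a $W$-point if Player I has a winning strategy in $G(Y)$ at $y$. *)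

From Stdlib Require Import List Arith.
Import ListNotations.

(** Topological spaces: a carrier with a family of open sets (Prop-valued
    subsets) containing the whole space, closed under binary intersections
    and arbitrary unions (the empty union gives the empty set). *)
Record topology := Topology {
  carrier :> Type;
  is_open : (carrier -> Prop) -> Prop;
  open_full : is_open (fun _ => True);
  open_inter : forall A B, is_open A -> is_open B -> is_open (fun x => A x /\ B x);
  open_union : forall (I : Type) (F : I -> carrier -> Prop),
      (forall i, is_open (F i)) -> is_open (fun x => exists i, F i x)
}.

Arguments is_open {t} _.

Definition prod_open (X Y : topology) (W : X * Y -> Prop) : Prop :=
  forall p, W p -> exists (A : X -> Prop) (B : Y -> Prop),
    is_open A /\ is_open B /\ A (fst p) /\ B (snd p) /\
    (forall a b, A a -> B b -> W (a, b)).

Lemma prod_open_full (X Y : topology) : prod_open X Y (fun _ => True).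
Proof.
  intros p _. exists (fun _ => True), (fun _ => True).
  repeat split; auto using open_full.
Qed.

Lemma prod_open_inter (X Y : topology) (A B : X * Y -> Prop) :
  prod_open X Y A -> prod_open X Y B -> prod_open X Y (fun x => A x /\ B x).
Proof.
  intros HA HB p [Ap Bp].
  destruct (HA p Ap) as (A1 & B1 & oA1 & oB1 & a1 & b1 & s1).
  destruct (HB p Bp) as (A2 & B2 & oA2 & oB2 & a2 & b2 & s2).
  exists (fun x => A1 x /\ A2 x), (fun y => B1 y /\ B2 y).
  repeat split; try apply open_inter; auto; firstorder.
Qed.

Lemma prod_open_union (X Y : topology) (I : Type) (F : I -> X * Y -> Prop) :
  (forall i, prod_open X Y (F i)) -> prod_open X Y (fun x => exists i, F i x).
Proof.
  intros HF p [i Hi].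
  destruct (HF i p Hi) as (A & B & oA & oB & a & b & s).
  exists A, B. repeat split; auto. intros x y Hx Hy. exists i. auto.
Qed.

Definition prod_topology (X Y : topology) : topology :=
  @Topology (X * Y)%type (prod_open X Y) (prod_open_full X Y)
    (prod_open_inter X Y) (prod_open_union X Y).

Definition dense {T : topology} (D : T -> Prop) : Prop :=
  forall U : T -> Prop, is_open U -> (exists x, U x) -> exists x, U x /\ D x.

Definition baire_space (T : topology) : Prop :=
  forall G : nat -> T -> Prop,
    (forall n, is_open (G n)) -> (forall n, dense (G n)) ->
    dense (fun x => forall n, G n x).

Definition prefix {A : Type} (u : nat -> A) (n : nat) : list A :=
  map u (seq 0 n).

(** A strategy for beta maps the finite sequence
    (U_0, ..., U_{n-1}) of alpha's previous moves to beta's move (x_n, V_n).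
    Given alpha's moves U : nat -> set, beta's n-th move is sigma (prefix U n). *)
Definition choquet_beta_strategy (Y : topology) : Type :=
  list (Y -> Prop) -> Y * (Y -> Prop).

Definition choquet_beta_legal {Y : topology} (sigma : choquet_beta_strategy Y)
    (U : nat -> Y -> Prop) (n : nat) : Prop :=
  let (x, V) := sigma (prefix U n) in
  is_open V /\ V x /\ (forall m, n = S m -> forall y, V y -> U m y).

Definition choquet_alpha_legal {Y : topology} (sigma : choquet_beta_strategy Y)
    (U : nat -> Y -> Prop) (n : nat) : Prop :=
  let (x, V) := sigma (prefix U n) in
  is_open (U n) /\ U n x /\ (forall y, U n y -> V y).

Definition choquet_beta_winning {Y : topology} (sigma : choquet_beta_strategy Y) : Prop :=
  forall U : nat -> Y -> Prop,
    (forall n, (forall k, k < n -> choquet_alpha_legal sigma U k) ->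
               choquet_beta_legal sigma U n) /\
    ((forall n, choquet_alpha_legal sigma U n) -> ~ exists y, forall n, U n y).

Definition choquet_beta_unfavorable (Y : topology) : Prop :=
  forall sigma : choquet_beta_strategy Y, ~ choquet_beta_winning sigma.

Definition converges {T : topology} (u : nat -> T) (y : T) : Prop :=
  forall O : T -> Prop, is_open O -> O y -> exists N, forall n, N <= n -> O (u n).

(** A strategy for Player I maps the list
    (y_0, ..., y_{n-1}) of Player II's previous points to an open
    neighbourhood U_n of y. *)
Definition gruenhage_I_winning {Y : topology} (y : Y) (tau : list Y -> Y -> Prop) : Prop :=
  (forall s, is_open (tau s) /\ tau s y) /\
  (forall ys : nat -> Y, (forall n, tau (prefix ys n) (ys n)) -> converges ys y).

Definition W_point {Y : topology} (y : Y) : Prop :=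
  exists tau : list Y -> Y -> Prop, gruenhage_I_winning y tau.

From Stdlib Require Import List Arith Lia Classical ClassicalEpsilon FunctionalExtensionality PropExtensionality.
From Stdlib Require Cantor.
From mathcomp Require classical_sets.
Import ListNotations.

(* Reduce to a decreasing sequence G_n of dense open sets and an open rectangle A0 x B0.
   Level by level, maximal disjoint families (Zorn) of open pieces of A0 are refined; a piece
   at level k carries W-points w_i of Y and neighbourhoods N_i (i < k) with piece x N_i inside
   G_i, the later w's being Player II's moves against Player I's winning strategies in the
   Gruenhage games at the earlier ones.  Baire's property of X inside A0 gives a point x in a
   chain of pieces, hence a sequence w with {x} x N_i inside G_i in which every w_m is a limit
   of later terms.  Then beta's strategy "jump to a later w_k inside alpha's last move and play
   N_k" is not winning, so some play has a common point y; it lies in N_k for arbitrarily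
   large k, so (x, y) lies in every G_n. *)

Lemma open_ext {T : topology} (A B : T -> Prop) :
  (forall x, A x <-> B x) -> is_open A -> is_open B.
Proof.
  intros AB HA. replace B with A; [exact HA |].
  apply functional_extensionality; intro x. apply propositional_extensionality, AB.
Qed.

Lemma open_or {T : topology} (A B : T -> Prop) :
  is_open A -> is_open B -> is_open (fun x => A x \/ B x).
Proof.
  intros HA HB.
  apply (open_ext (fun x => exists b : bool, (if b then A else B) x)).
  - intro x; split.
    + intros [[|] Hx]; auto.
    + intros [Hx | Hx]; [exists true | exists false]; exact Hx.
  - apply open_union. intros [|]; assumption.
Qed.

Lemma open_list_inter {T : topology} (l : list (T -> Prop)) :
  (forall U, In U l -> is_open U) -> is_open (fun z => forall U, In U l -> U z).
Proof.
  induction l as [|U l IH]; intros Hl.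
  - apply (open_ext (fun _ => True)); [| apply open_full].
    intro z; split; [intros _ V [] | auto].
  - apply (open_ext (fun z => U z /\ forall V, In V l -> V z)).
    + intro z; split.
      * intros [HU Hl'] V [<- | HV]; [exact HU | exact (Hl' V HV)].
      * intro h; split; [apply h; left; reflexivity | intros V HV; apply h; right; exact HV].
    + apply open_inter; [apply Hl; left; reflexivity |].
      apply IH. intros V HV; apply Hl; right; exact HV.
Qed.

Lemma dense_inter {T : topology} (A B : T -> Prop) :
  is_open A -> dense A -> dense B -> dense (fun x => A x /\ B x).
Proof.
  intros oA dA dB U oU neU.
  destruct (dA U oU neU) as [a [Ua Aa]].
  destruct (dB (fun x => U x /\ A x) (open_inter _ _ _ oU oA) (ex_intro _ a (conj Ua Aa)))
    as [b [[Ub Ab] Bb]].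
  exists b; auto.
Qed.

Fixpoint partial_inter {T : Type} (G : nat -> T -> Prop) (k : nat) : T -> Prop :=
  match k with
  | 0 => G 0
  | S k => fun z => partial_inter G k z /\ G (S k) z
  end.

Lemma baire_of_decreasing (T : topology) :
  (forall G : nat -> T -> Prop,
     (forall n, is_open (G n)) -> (forall n, dense (G n)) ->
     (forall n z, G (S n) z -> G n z) -> dense (fun z => forall n, G n z)) ->
  baire_space T.
Proof.
  intros Hdec G oG dG U oU neU.
  assert (o : forall k, is_open (partial_inter G k)).
  { induction k; simpl; [apply oG | apply open_inter; auto]. }
  assert (d : forall k, dense (partial_inter G k)).
  { induction k; simpl; [apply dG | apply dense_inter; auto]. }
  destruct (Hdec (partial_inter G) o d (fun n z h => proj1 h) U oU neU) as [x [Ux Hx]].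
  exists x; split; [exact Ux |].
  intros [|n]; [exact (Hx 0) | exact (proj2 (Hx (S n)))].
Qed.

Lemma decreasing_le {T : Type} (G : nat -> T -> Prop) :
  (forall n z, G (S n) z -> G n z) -> forall n k z, n <= k -> G k z -> G n z.
Proof. intros decG n k z Hnk. induction Hnk; auto. Qed.

Lemma dense_open_rectangle (X Y : topology) (W : X * Y -> Prop) :
  @is_open (prod_topology X Y) W -> @dense (prod_topology X Y) W ->
  forall (A : X -> Prop) (B : Y -> Prop),
    is_open A -> is_open B -> (exists a, A a) -> (exists b, B b) ->
    exists (A' : X -> Prop) (B' : Y -> Prop),
      is_open A' /\ is_open B' /\ (exists a, A' a) /\ (exists b, B' b) /\
      (forall a, A' a -> A a) /\ (forall b, B' b -> B b) /\
      (forall a b, A' a -> B' b -> W (a, b)).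
Proof.
  intros oW dW A B oA oB [a Aa] [b Bb].
  assert (oAB : @is_open (prod_topology X Y) (fun p => A (fst p) /\ B (snd p))).
  { intros p [Ap Bp]. exists A, B. repeat split; auto. }
  destruct (dW _ oAB (ex_intro _ (a, b) (conj Aa Bb))) as [q [[Aq Bq] Wq]].
  destruct (oW q Wq) as (A1 & B1 & oA1 & oB1 & A1q & B1q & sub1).
  exists (fun a => A1 a /\ A a), (fun b => B1 b /\ B b).
  repeat split; try apply open_inter; auto.
  - exists (fst q); auto.
  - exists (snd q); auto.
  - intros a' [] ; assumption.
  - intros b' []; assumption.
  - intros a' b' [] []; auto.
Qed.

Lemma prefix_ext {A : Type} (f g : nat -> A) (n : nat) :
  (forall i, i < n -> f i = g i) -> prefix f n = prefix g n.
Proof.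
  intro fg. unfold prefix. apply map_ext_in. intros i Hi. apply in_seq in Hi. apply fg. lia.
Qed.

Lemma prefix_S {A : Type} (f : nat -> A) (n : nat) : prefix f (S n) = prefix f n ++ [f n].
Proof. unfold prefix. rewrite seq_S, map_app. reflexivity. Qed.

Lemma in_prefix {A : Type} (f : nat -> A) (n : nat) (a : A) :
  In a (prefix f n) <-> exists i, i < n /\ a = f i.
Proof.
  unfold prefix. rewrite in_map_iff. split.
  - intros [i [<- Hi]]. apply in_seq in Hi. exists i; split; [lia | reflexivity].
  - intros [i [Hi ->]]. exists i; split; [reflexivity | apply in_seq; lia].
Qed.

(* Stage [slot m j] of the construction plays the [j]-th move of Player II in the
   Gruenhage game at the [m]-th point; every positive stage is used exactly once. *)
Definition slot (m j : nat) : nat := S (Cantor.to_nat (j, m)).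

Lemma slot_gt (m j : nat) : m < slot m j.
Proof. unfold slot. pose proof (Cantor.to_nat_non_decreasing j m). lia. Qed.

Lemma slot_lt_mono (m j j' : nat) : j' < j -> slot m j' < slot m j.
Proof.
  intro Hj. unfold slot.
  pose proof (Cantor.to_nat_spec j m). pose proof (Cantor.to_nat_spec j' m). nia.
Qed.

Lemma slot_inj (m j m' j' : nat) : slot m j = slot m' j' -> m = m' /\ j = j'.
Proof.
  unfold slot. intro E.
  assert (E' : Cantor.to_nat (j, m) = Cantor.to_nat (j', m')) by congruence.
  apply Cantor.to_nat_inj in E'. injection E' as -> ->. auto.
Qed.

Lemma slot_surj (K : nat) : exists m j, slot m j = S K.
Proof.
  destruct (Cantor.of_nat K) as [j m] eqn:E. exists m, j. unfold slot.
  rewrite <- E, Cantor.cancel_to_of. reflexivity.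
Qed.

Definition gruenhage_strategy {Y : topology} (y : Y) : list Y -> Y -> Prop :=
  epsilon (inhabits (fun _ _ => True)) (fun tau => gruenhage_I_winning y tau).

Lemma gruenhage_strategy_winning {Y : topology} (y : Y) :
  W_point y -> gruenhage_I_winning y (gruenhage_strategy y).
Proof. intros [tau Htau]. unfold gruenhage_strategy. apply epsilon_spec. exists tau; exact Htau. Qed.

Definition respects_strategy {Y : topology} (w : nat -> Y) (i : nat) (b : Y) : Prop :=
  forall m j, slot m j = i -> gruenhage_strategy (w m) (prefix (fun j' => w (slot m j')) j) b.

Lemma respects_strategy_ext {Y : topology} (w w' : nat -> Y) (i : nat) (b : Y) :
  (forall l, l < i -> w l = w' l) -> respects_strategy w i b -> respects_strategy w' i b.
Proof.
  intros ww' Hw m j E. rewrite <- E in ww'.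
  rewrite <- (ww' m (slot_gt m j)).
  rewrite <- (prefix_ext (fun j' => w (slot m j'))).
  - apply Hw; exact E.
  - intros j' Hj'. apply ww', slot_lt_mono, Hj'.
Qed.

Lemma open_respects_strategy {Y : topology} (w : nat -> Y) (i : nat) :
  (forall m, m < i -> W_point (w m)) -> is_open (respects_strategy w i).
Proof.
  intro Ww. destruct i as [|K].
  - apply (open_ext (fun _ => True)); [| apply open_full].
    intro b; split; [intros _ m j E; discriminate E | auto].
  - destruct (slot_surj K) as (m & j & E).
    apply (open_ext (gruenhage_strategy (w m) (prefix (fun j' => w (slot m j')) j))).
    + intro b; split.
      * intros Hb m' j' E'. rewrite <- E in E'.
        apply slot_inj in E' as [-> ->]. exact Hb.
      * intro Hb; apply Hb, E.
    + rewrite <- E in Ww.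
      apply (gruenhage_strategy_winning _ (Ww m (slot_gt m j))).
Qed.

Lemma exists_respects_strategy {Y : topology} (w : nat -> Y) (i : nat) (B : Y -> Prop) :
  (forall m, m < i -> W_point (w m) /\ B (w m)) -> (exists b, B b) ->
  exists b, B b /\ respects_strategy w i b.
Proof.
  intros Ww [b0 Bb0]. destruct i as [|K].
  - exists b0. split; [exact Bb0 |]. intros m j E; discriminate E.
  - destruct (slot_surj K) as (m & j & E). rewrite <- E in Ww |- *.
    destruct (Ww m (slot_gt m j)) as [Wm Bm].
    exists (w m). split; [exact Bm |].
    intros m' j' E'. apply slot_inj in E' as [<- <-].
    apply (gruenhage_strategy_winning _ Wm).
Qed.

Lemma respects_strategy_revisits {Y : topology} (w : nat -> Y) :
  (forall i, W_point (w i) /\ respects_strategy w i (w i)) ->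
  forall m (U : Y -> Prop), is_open U -> U (w m) -> exists k, m < k /\ U (w k).
Proof.
  intros Hw m U oU Um.
  destruct (gruenhage_strategy_winning _ (proj1 (Hw m))) as [_ Hconv].
  destruct (Hconv (fun j => w (slot m j))) with U as [j0 Hj0]; auto.
  - intro j. apply (proj2 (Hw (slot m j))). reflexivity.
  - exists (slot m j0). split; [apply slot_gt | apply Hj0; lia].
Qed.

Definition dense_in {X : topology} (A0 D : X -> Prop) : Prop :=
  forall U, is_open U -> (exists a, U a /\ A0 a) -> exists a, U a /\ D a.

Definition family_union {T X : Type} (dom : T -> X -> Prop) (F : T -> Prop) : X -> Prop :=
  fun a => exists v, F v /\ dom v a.

Definition disjoint_family {T X : Type} (dom : T -> X -> Prop) (F : T -> Prop) : Prop :=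
  forall u v, F u -> F v -> (exists a, dom u a /\ dom v a) -> u = v.

Lemma open_family_union {X : topology} {T : Type} (dom : T -> X -> Prop) (F : T -> Prop) :
  (forall v, F v -> is_open (dom v)) -> is_open (family_union dom F).
Proof.
  intro oF.
  apply (open_ext (fun a => exists v : {v | F v}, dom (proj1_sig v) a)).
  - intro a; split.
    + intros [[v Fv] Hv]. exists v; auto.
    + intros [v [Fv Hv]]. exists (exist _ v Fv). exact Hv.
  - apply open_union. intros [v Fv]. exact (oF v Fv).
Qed.

Lemma maximal_disjoint_subfamily {X : topology} {T : Type} (dom : T -> X -> Prop)
    (A0 : X -> Prop) (C : T -> Prop) :
  (forall v, C v -> exists a, dom v a) ->
  (forall U, is_open U -> (exists a, U a /\ A0 a) -> exists v, C v /\ forall a, dom v a -> U a) ->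
  exists F, (forall v, F v -> C v) /\ disjoint_family dom F /\ dense_in A0 (family_union dom F).
Proof.
  intros neC cofC.
  destruct (@classical_sets.Zorn_bigcup T
              (fun F => (forall v, F v -> C v) /\ disjoint_family dom F)) as [M [[MC Md] Mmax]].
  - intros Fam FamP Ftot. split.
    + intros v [Z FZ Zv]. exact (proj1 (FamP Z FZ) v Zv).
    + intros u v [Z FZ Zu] [Z' FZ' Zv].
      destruct (Ftot Z Z' FZ FZ') as [ZZ' | Z'Z].
      * apply (proj2 (FamP Z' FZ')); auto.
      * apply (proj2 (FamP Z FZ)); auto.
  - exists M. split; [exact MC |]. split; [exact Md |].
    intros U oU meetU. apply NNPP. intro Hno.
    destruct (cofC U oU meetU) as [v0 [Cv0 v0U]].
    destruct (neC v0 Cv0) as [a0 Ha0].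
    apply (Mmax (fun v => M v \/ v = v0)).
    + split; [intros t Mt; left; exact Mt |].
      intro sub. pose proof (sub v0 (or_intror eq_refl)) as Mv0.
      apply Hno. exists a0. split; [apply v0U, Ha0 | exists v0; auto].
    + split.
      * intros v [Mv | ->]; auto.
      * intros u v [Mu | ->] [Mv | ->] [a [ua va]].
        -- apply Md; auto. exists a; auto.
        -- exfalso. apply Hno. exists a. split; [apply v0U, va | exists u; auto].
        -- exfalso. apply Hno. exists a. split; [apply v0U, ua | exists v; auto].
        -- reflexivity.
Qed.

Lemma baire_dense_in {X : topology} (A0 : X -> Prop) (D : nat -> X -> Prop) :
  baire_space X -> is_open A0 -> (exists a, A0 a) ->
  (forall k, is_open (D k)) -> (forall k, dense_in A0 (D k)) ->
  exists x, A0 x /\ forall k, D k x.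
Proof.
  intros HX oA0 neA0 oD dD.
  set (ext := fun a => exists U : {U : X -> Prop | is_open U /\ forall z, U z -> ~ A0 z},
                 proj1_sig U a).
  assert (oext : is_open ext) by (apply open_union; intro U; exact (proj1 (proj2_sig U))).
  destruct (HX (fun k a => D k a \/ ext a)) with A0 as [x [A0x Hx]]; auto.
  - intro k. apply open_or; auto.
  - intros k U oU [a Ua].
    destruct (classic (exists a, U a /\ A0 a)) as [meetU | Hno].
    + destruct (dD k U oU meetU) as [b [Ub Db]]. exists b; auto.
    + exists a. split; [exact Ua | right].
      exists (exist _ U (conj oU (fun z Uz A0z => Hno (ex_intro _ z (conj Uz A0z))))).
      exact Ua.
  - exists x. split; [exact A0x |]. intro k.
    destruct (Hx k) as [Dx | [U Ux]]; [exact Dx |].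
    contradiction (proj2 (proj2_sig U) x Ux A0x).
Qed.

Lemma dependent_choice_nat {T : Type} (P : nat -> T -> Prop) (R : nat -> T -> T -> Prop) :
  (exists t, P 0 t) -> (forall k t, P k t -> exists t', P (S k) t' /\ R k t t') ->
  exists f : nat -> T, forall k, P k (f k) /\ R k (f k) (f (S k)).
Proof.
  intros [t0 H0] Hstep.
  set (next := fun k (s : {t | P k t}) =>
         constructive_indefinite_description _ (Hstep k (proj1_sig s) (proj2_sig s))).
  set (g := nat_rect (fun k => {t | P k t}) (exist _ t0 H0)
              (fun k s => exist _ (proj1_sig (next k s)) (proj1 (proj2_sig (next k s))))).
  exists (fun k => proj1_sig (g k)). intro k. split.
  - exact (proj2_sig (g k)).
  - exact (proj2 (proj2_sig (next k (g k)))).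
Qed.

Lemma diagonal_stable {A : Type} (f : nat -> nat -> A) :
  (forall k i, i < k -> f (S k) i = f k i) -> forall k i, i < k -> f k i = f (S i) i.
Proof. intros Hf k i Hik. induction Hik as [| k Hik IH]; [reflexivity |]. rewrite Hf; auto. Qed.

Definition update {A : Type} (f : nat -> A) (k : nat) (x : A) : nat -> A :=
  fun i => if Nat.eqb i k then x else f i.

Lemma update_eq {A : Type} (f : nat -> A) (k : nat) (x : A) : update f k x k = x.
Proof. unfold update. rewrite Nat.eqb_refl. reflexivity. Qed.

Lemma update_lt {A : Type} (f : nat -> A) (k i : nat) (x : A) : i < k -> update f k x i = f i.
Proof. intro Hik. unfold update. destruct (Nat.eqb_spec i k); [lia | reflexivity]. Qed.

Section BaireSide.

Variables (X Y : topology) (A0 : X -> Prop) (B0 : Y -> Prop) (H : nat -> X * Y -> Prop).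
Hypothesis A0_open : is_open A0.
Hypothesis A0_nonempty : exists a, A0 a.
Hypothesis B0_open : is_open B0.
Hypothesis B0_nonempty : exists b, B0 b.
Hypothesis W_dense : dense (fun y : Y => W_point y).
Hypothesis H_rectangle : forall k (A : X -> Prop) (B : Y -> Prop),
  is_open A -> is_open B -> (exists a, A a) -> (exists b, B b) ->
  exists (A' : X -> Prop) (B' : Y -> Prop),
    is_open A' /\ is_open B' /\ (exists a, A' a) /\ (exists b, B' b) /\
    (forall a, A' a -> A a) /\ (forall b, B' b -> B b) /\
    (forall a b, A' a -> B' b -> H k (a, b)).

Record node := mkNode { dom : X -> Prop; pt : nat -> Y; nbhd : nat -> Y -> Prop }.

Definition admissible (v : node) (i : nat) : Prop :=
  is_open (nbhd v i) /\ nbhd v i (pt v i) /\ (forall b, nbhd v i b -> B0 b) /\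
  W_point (pt v i) /\ respects_strategy (pt v) i (pt v i) /\
  (forall a b, dom v a -> nbhd v i b -> H i (a, b)).

Definition valid (k : nat) (v : node) : Prop :=
  is_open (dom v) /\ (exists a, dom v a) /\ forall i, i < k -> admissible v i.

Definition extends (k : nat) (v' v : node) : Prop :=
  (forall a, dom v' a -> dom v a) /\ forall i, i < k -> pt v' i = pt v i.

Lemma admissible_restrict (v v' : node) (i : nat) :
  (forall a, dom v' a -> dom v a) -> (forall l, l <= i -> pt v' l = pt v l) ->
  nbhd v' i = nbhd v i -> admissible v i -> admissible v' i.
Proof.
  intros sub Ept EN (oN & Npt & NB0 & Wpt & Rpt & NH).
  assert (Ei : pt v' i = pt v i) by auto.
  unfold admissible. rewrite EN, Ei.
  repeat split; auto.
  - apply (respects_strategy_ext (pt v)); auto.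
    intros l Hl. symmetry. apply Ept. lia.
Qed.

Lemma extend_node (k : nat) (v : node) (A : X -> Prop) :
  valid k v -> is_open A -> (exists a, A a) -> (forall a, A a -> dom v a) ->
  exists v', valid (S k) v' /\ extends k v' v /\ forall a, dom v' a -> A a.
Proof.
  intros (odom & nedom & adm) oA neA Asub.
  set (T := fun b => B0 b /\ respects_strategy (pt v) k b).
  assert (oT : is_open T).
  { apply open_inter; [exact B0_open |].
    apply open_respects_strategy. intros m Hm. apply (adm m Hm). }
  assert (neT : exists b, T b).
  { apply exists_respects_strategy; [| exact B0_nonempty].
    intros m Hm. destruct (adm m Hm) as (_ & Npt & NB0 & Wpt & _). auto. }
  destruct (H_rectangle k A T oA oT neA neT)
    as (A' & N & oA' & oN & neA' & neN & A'A & NT & A'NH).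
  destruct (W_dense N oN neN) as (w & Nw & Ww).
  exists (mkNode A' (update (pt v) k w) (update (nbhd v) k N)).
  split; [split; [exact oA' | split; [exact neA' |]] |].
  - intros i Hi. destruct (Nat.eq_dec i k) as [-> | ne].
    + unfold admissible; simpl. rewrite !update_eq.
      destruct (NT w Nw) as [_ Rw].
      repeat split; auto.
      * intros b Nb. apply (NT b Nb).
      * apply (respects_strategy_ext (pt v)); [| exact Rw].
        intros l Hl. symmetry. apply update_lt, Hl.
    + assert (Hik : i < k) by lia.
      apply (admissible_restrict v); simpl.
      * intros a Ha. apply Asub, A'A, Ha.
      * intros l Hl. apply update_lt. lia.
      * apply update_lt, Hik.
      * exact (adm i Hik).
  - split; [split |]; simpl.
    + intros a Ha. apply Asub, A'A, Ha.
    + intros i Hi. apply update_lt, Hi.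
    + exact A'A.
Qed.

Definition level (k : nat) (F : node -> Prop) : Prop :=
  (forall v, F v -> valid k v) /\ disjoint_family dom F /\ dense_in A0 (family_union dom F).

Lemma level_0 : exists F, level 0 F.
Proof.
  destruct B0_nonempty as [b0 _].
  set (root := mkNode A0 (fun _ => b0) (fun _ _ => True)).
  exists (fun v => v = root). split; [| split].
  - intros v ->. split; [exact A0_open | split; [exact A0_nonempty | intros i Hi; lia]].
  - intros u v -> -> _. reflexivity.
  - intros U _ [a [Ua A0a]]. exists a. split; [exact Ua | exists root; auto].
Qed.

Lemma level_S (k : nat) (F : node -> Prop) :
  level k F -> exists F', level (S k) F' /\ forall v', F' v' -> exists v, F v /\ extends k v' v.
Proof.
  intros (Fvalid & Fdisj & Fdense).
  destruct (maximal_disjoint_subfamily dom A0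
              (fun v' => valid (S k) v' /\ exists v, F v /\ extends k v' v))
    as (F' & F'C & F'disj & F'dense).
  - intros v' [(_ & ne & _) _]. exact ne.
  - intros U oU meetU.
    destruct (Fdense U oU meetU) as (a & Ua & v & Fv & va).
    destruct (Fvalid v Fv) as (ov & nev & admv).
    destruct (extend_node k v (fun a => U a /\ dom v a)) as (v' & Vv' & ext & v'U).
    + split; auto.
    + apply open_inter; auto.
    + exists a; auto.
    + intros a' []; assumption.
    + exists v'. split; [split; [exact Vv' | exists v; auto] |].
      intros a' Ha'. apply (v'U a' Ha').
  - exists F'. split; [split; [| split] |]; auto.
    + intros v Hv. apply (F'C v Hv).
    + intros v' Hv'. apply (F'C v' Hv').
Qed.

Lemma baire_side (HX : baire_space X) :
  exists (x : X) (w : nat -> Y) (N : nat -> Y -> Prop), A0 x /\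
    forall i, is_open (N i) /\ N i (w i) /\ (forall b, N i b -> B0 b) /\
      W_point (w i) /\ respects_strategy w i (w i) /\ (forall b, N i b -> H i (x, b)).
Proof.
  destruct (dependent_choice_nat level
              (fun k F F' => forall v', F' v' -> exists v, F v /\ extends k v' v)
              level_0 level_S) as [Fs HFs].
  destruct (baire_dense_in A0 (fun k => family_union dom (Fs k)) HX A0_open A0_nonempty)
    as (x & A0x & Hx).
  - intro k. apply open_family_union. intros v Fv. exact (proj1 (proj1 (proj1 (HFs k)) v Fv)).
  - intro k. apply (proj1 (HFs k)).
  - destruct (choice (fun k v => Fs k v /\ dom v x) Hx) as [nu Hnu].
    assert (chain : forall k, extends k (nu (S k)) (nu k)).
    { intro k. destruct (HFs k) as [(_ & Fdisj & _) Hext].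
      destruct (Hext (nu (S k)) (proj1 (Hnu (S k)))) as (v & Fv & ext).
      replace (nu k) with v; [exact ext |].
      apply Fdisj; [exact Fv | apply Hnu |].
      exists x. split; [apply ext, Hnu | apply Hnu]. }
    assert (stable : forall k i, i < k -> pt (nu k) i = pt (nu (S i)) i).
    { apply (diagonal_stable (fun k => pt (nu k))). intros k i Hi. apply chain, Hi. }
    exists x, (fun i => pt (nu (S i)) i), (fun i => nbhd (nu (S i)) i).
    split; [exact A0x |]. intro i.
    destruct (proj1 (proj1 (HFs (S i))) (nu (S i)) (proj1 (Hnu (S i)))) as (_ & _ & adm).
    destruct (adm i (Nat.lt_succ_diag_r i)) as (oN & Npt & NB0 & Wpt & Rpt & NH).
    repeat split; auto.
    + apply (respects_strategy_ext (pt (nu (S i)))); [| exact Rpt].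
      intros l Hl. apply stable. lia.
    + intros b Nb. apply NH; [apply Hnu | exact Nb].
Qed.

End BaireSide.

Section ChoquetSide.

Variables (Y : topology) (w : nat -> Y) (N : nat -> Y -> Prop).
Hypothesis N_open : forall k, is_open (N k).
Hypothesis N_pt : forall k, N k (w k).
Hypothesis w_revisits : forall m (U : Y -> Prop), is_open U -> U (w m) -> exists k, m < k /\ U (w k).

Definition next_stage (m : nat) (U : Y -> Prop) : nat :=
  epsilon (inhabits 0) (fun k => m < k /\ U (w k)).

Definition stage (l : list (Y -> Prop)) : nat := fold_left next_stage l 0.

Definition revisit_strategy : choquet_beta_strategy Y :=
  fun l => (w (stage l), fun z => N (stage l) z /\ forall U, In U l -> U z).

Lemma next_stage_spec (m : nat) (U : Y -> Prop) :
  is_open U -> U (w m) -> m < next_stage m U /\ U (w (next_stage m U)).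
Proof.
  intros oU Um. unfold next_stage.
  apply (epsilon_spec (inhabits 0) (fun k => m < k /\ U (w k))), w_revisits; assumption.
Qed.

Lemma stage_S (U : nat -> Y -> Prop) (n : nat) :
  stage (prefix U (S n)) = next_stage (stage (prefix U n)) (U n).
Proof. unfold stage. rewrite prefix_S, fold_left_app. reflexivity. Qed.

Lemma alpha_legal_revisit (U : nat -> Y -> Prop) (n : nat) :
  choquet_alpha_legal revisit_strategy U n ->
  is_open (U n) /\ U n (w (stage (prefix U n))) /\
  forall z, U n z -> N (stage (prefix U n)) z /\ forall V, In V (prefix U n) -> V z.
Proof. intro Hn. exact Hn. Qed.

Lemma stage_ge (U : nat -> Y -> Prop) (n : nat) :
  (forall k, k < n -> choquet_alpha_legal revisit_strategy U k) -> n <= stage (prefix U n).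
Proof.
  induction n as [| n IH]; intro Hal; [lia |].
  destruct (alpha_legal_revisit U n (Hal n (Nat.lt_succ_diag_r n))) as (oU & Uw & _).
  rewrite stage_S.
  pose proof (proj1 (next_stage_spec _ _ oU Uw)).
  enough (n <= stage (prefix U n)) by lia.
  apply IH. intros k Hk. apply Hal. lia.
Qed.

Lemma revisit_strategy_legal (U : nat -> Y -> Prop) (n : nat) :
  (forall k, k < n -> choquet_alpha_legal revisit_strategy U k) ->
  choquet_beta_legal revisit_strategy U n.
Proof.
  intro Hal. unfold choquet_beta_legal, revisit_strategy.
  assert (HU : forall i, i < n -> is_open (U i)) by (intros i Hi; apply (Hal i Hi)).
  split; [| split].
  - apply open_inter; [apply N_open |].
    apply open_list_inter. intros V HV. apply in_prefix in HV as (i & Hi & ->). auto.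
  - split; [apply N_pt |].
    intros V HV. apply in_prefix in HV as (i & Hi & ->).
    destruct n as [| n]; [lia |].
    destruct (alpha_legal_revisit U n (Hal n (Nat.lt_succ_diag_r n))) as (oU & Uw & Usub).
    rewrite stage_S.
    destruct (next_stage_spec _ _ oU Uw) as [_ Unext].
    destruct (Nat.eq_dec i n) as [-> | ne]; [exact Unext |].
    apply (Usub _ Unext). apply in_prefix. exists i. split; [lia | reflexivity].
  - intros m Hm y [_ Hy]. apply Hy, in_prefix. exists m. split; [lia | reflexivity].
Qed.

Lemma choquet_revisit : choquet_beta_unfavorable Y ->
  exists y, forall n, exists k, n <= k /\ N k y.
Proof.
  intro HCh. apply NNPP. intro Hno.
  apply (HCh revisit_strategy). intro U. split; [exact (revisit_strategy_legal U) |].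
  intros Hal [y Hy]. apply Hno. exists y. intro n.
  exists (stage (prefix U n)). split.
  - apply stage_ge. intros k _. apply Hal.
  - destruct (alpha_legal_revisit U n (Hal n)) as (_ & _ & Usub).
    exact (proj1 (Usub y (Hy n))).
Qed.

End ChoquetSide.

Theorem theorem3p2 (X Y : topology) :
  baire_space X ->
  dense (fun y : Y => W_point y) ->
  choquet_beta_unfavorable Y ->
  baire_space (prod_topology X Y).
Proof.
  intros HX HW HCh. apply baire_of_decreasing. intros G oG dG decG O oO [p Op].
  destruct (oO p Op) as (A0 & B0 & oA0 & oB0 & A0p & B0p & sub0).
  destruct (baire_side X Y A0 B0 G oA0 (ex_intro _ _ A0p) oB0 (ex_intro _ _ B0p) HW
              (fun k => dense_open_rectangle X Y (G k) (oG k) (dG k)) HX)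
    as (x & w & N & A0x & Hw).
  destruct (choquet_revisit Y w N) as [y Hy]; try apply Hw; auto.
  { apply respects_strategy_revisits. intro i. split; apply Hw. }
  exists (x, y). split.
  - destruct (Hy 0) as (k & _ & Nky). apply sub0; [exact A0x | apply (Hw k), Nky].
  - intro n. destruct (Hy n) as (k & nk & Nky).
    apply (decreasing_le G decG n k); [exact nk | apply (Hw k), Nky].
Qed.
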